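(* Let $(M,\circ)$ be a fuzzy $\Gamma$-hypersemigroup and let $(M,\ast)$ be its associated $\Gamma$-hypersemigroup, where $a\ast\gamma\ast b=\{x\in M\mid (a\circ\gamma\circ b)(x)>0\}$ for all $a,b\in M$, $\gamma\in\Gamma$. Let $\rho$ be an equivalence relation on $M$, and on $M/\rho=\{a\rho : a\in M\}$ define $a\rho\otimes\gamma\otimes b\rho=\{c\rho : c\in a\ast\gamma\ast b\}=\{c\rho : (a\circ\gamma\circ b)(c)>0\}$. Then: (i) $\rho$ is a fuzzy $\Gamma$-regular relation on $(M,\circ)$ if and only if $(M/\rho,\otimes)$ is a $\Gamma$-hypersemigroup. (ii) $\rho$ is a fuzzy $\Gamma$-strongly regular relation on $(M,\circ)$ if and only if $(M/\rho,\otimes)$ is a $\Gamma$-semigroup.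
   Context: $M$ and $\Gamma$ are non-empty sets; $F(M)$ is the set of fuzzy subsets of $M$. A fuzzy $\Gamma$-hyperoperation is a map $M\times\Gamma\times M\to F(M)$, $(a,\gamma,b)\mapsto a\circ\gamma\circ b$. For a fuzzy subset $\mu\neq 0$, $(a\circ\alpha\circ\mu)(r)=\bigvee_{t\in M}((a\circ\alpha\circ t)(r)\wedge\mu(t))$ and $(\mu\circ\alpha\circ a)(r)=\bigvee_{t\in M}(\mu(t)\wedge(t\circ\alpha\circ a)(r))$ (both $0$ if $\mu=0$). $(M,\circ)$ is a fuzzy $\Gamma$-hypersemigroup if $(a\circ\alpha\circ b)\circ\beta\circ c=a\circ\alpha\circ(b\circ\beta\circ c)$ for all $a,b,c\in M$, $\alpha,\beta\in\Gamma$. A $\Gamma$-hypersemigroup is a set $M$ where each $\gamma\in\Gamma$ is a hyperoperation $x\gamma y\subseteq M$ (non-empty) with $x\alpha(y\beta z)=(x\alpha y)\beta z$; it is a $\Gamma$-semigroup when each $\gamma$ is an operation (single-valued). For an equivalence relation $\rho$ on $M$ and fuzzy subsets $\mu,\nu$, write $\mu\rho\nu$ if (1) $\mu(a)>0$ implies there is $b$ with $\nu(b)>0$ and $a\rho b$, and (2) $\nu(x)>0$ implies there is $y$ with $\mu(y)>0$ and $x\rho y$. $\rho$ is a fuzzy $\Gamma$-regular relation on $(M,\circ)$ if for all $a,b,c\in M$, $\gamma\in\Gamma$: $a\rho b$ implies $(a\circ\gamma\circ c)\rho(b\circ\gamma\circ c)$ and $(c\circ\gamma\circ a)\rho(c\circ\gamma\circ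 b)$. $\rho$ is a fuzzy $\Gamma$-strongly regular relation on $(M,\circ)$ if for all $a,b,c,d\in M$, $\gamma\in\Gamma$ with $a\rho b$ and $c\rho d$: for all $x$ with $(a\circ\gamma\circ c)(x)>0$ and all $y$ with $(b\circ\gamma\circ d)(y)>0$, we have $x\rho y$. *)

From mathcomp Require Import all_boot all_order all_algebra.
From mathcomp Require Import all_classical all_reals.
Import Order.TTheory GRing.Theory Num.Theory.
Set Implicit Arguments. Unset Strict Implicit. Unset Printing Implicit Defensive.
Local Open Scope classical_set_scope.
Local Open Scope ring_scope.

Section FuzzyGamma.
Context {R : realType} {M G : Type}.

Definition fuzzy_subset (mu : M -> R) : Prop := forall x, 0 <= mu x <= 1.

Definition fuzzy_Gamma_hyperop (o : M -> G -> M -> M -> R) : Prop :=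
  forall a g b, fuzzy_subset (o a g b).

Definition fcompl (o : M -> G -> M -> M -> R) (a : M) (g : G) (mu : M -> R) : M -> R :=
  fun r => sup [set Num.min (o a g t r) (mu t) | t in [set: M]].

Definition fcompr (o : M -> G -> M -> M -> R) (mu : M -> R) (g : G) (a : M) : M -> R :=
  fun r => sup [set Num.min (mu t) (o t g a r) | t in [set: M]].

Definition fuzzy_Gamma_hypersemigroup (o : M -> G -> M -> M -> R) : Prop :=
  forall a b c al be, fcompr o (o a al b) be c = fcompl o a al (o b be c).

Definition assoc_hop (o : M -> G -> M -> M -> R) (a : M) (g : G) (b : M) : set M :=
  [set x | 0 < o a g b x].

Definition Gamma_hypersemigroup {T : Type} (S : set T) (hop : T -> G -> T -> set T) : Prop :=
  (forall x g y, S x -> S y -> hop x g y !=set0 /\ hop x g y `<=` S) /\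
  (forall x y z al be, S x -> S y -> S z ->
     \bigcup_(u in hop y be z) hop x al u = \bigcup_(u in hop x al y) hop u be z).

Definition Gamma_semigroup {T : Type} (S : set T) (hop : T -> G -> T -> set T) : Prop :=
  Gamma_hypersemigroup S hop /\
  (forall x g y, S x -> S y -> exists w, hop x g y = [set w]).

Definition is_equivalence (rho : M -> M -> Prop) : Prop :=
  (forall x, rho x x) /\ (forall x y, rho x y -> rho y x) /\
  (forall x y z, rho x y -> rho y z -> rho x z).

Definition cls (rho : M -> M -> Prop) (a : M) : set M := [set y | rho a y].
Definition quot_set (rho : M -> M -> Prop) : set (set M) := [set cls rho a | a in [set: M]].

Definition quotient_hop_spec (o : M -> G -> M -> M -> R) (rho : M -> M -> Prop)
  (op : set M -> G -> set M -> set (set M)) : Prop :=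
  forall a g b, op (cls rho a) g (cls rho b) = [set cls rho c | c in assoc_hop o a g b].

Definition fuzzy_rel (rho : M -> M -> Prop) (mu nu : M -> R) : Prop :=
  (forall a, 0 < mu a -> exists b, 0 < nu b /\ rho a b) /\
  (forall x, 0 < nu x -> exists y, 0 < mu y /\ rho x y).

Definition fuzzy_Gamma_regular (o : M -> G -> M -> M -> R) (rho : M -> M -> Prop) : Prop :=
  forall a b c g, rho a b ->
    fuzzy_rel rho (o a g c) (o b g c) /\ fuzzy_rel rho (o c g a) (o c g b).

Definition fuzzy_Gamma_strongly_regular (o : M -> G -> M -> M -> R) (rho : M -> M -> Prop) : Prop :=
  forall a b c d g, rho a b -> rho c d ->
    forall x y, 0 < o a g c x -> 0 < o b g d y -> rho x y.

End FuzzyGamma.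

From mathcomp Require Import all_boot all_order all_algebra.
From mathcomp Require Import all_classical all_reals.
Local Open Scope classical_set_scope.
Local Open Scope ring_scope.

(* Everything is read through the classes met by a support: [mu rho nu] says exactly
   that the supports of [mu] and [nu] meet the same rho-classes.  Hence regularity
   is precisely the condition making the class product independent of the chosen
   representatives, and strong regularity additionally forces each product to be a
   single class.  Associativity of the quotient is inherited from the associated
   Gamma-hypersemigroup. *)

Section FuzzyQuotient.
Context {R : realType} {M G : Type}.
Variable o : M -> G -> M -> M -> R.
Variable rho : M -> M -> Prop.
Hypothesis rho_equiv : is_equivalence rho.

Lemma cls_eqP a b : cls rho a = cls rho b <-> rho a b.
Proof.
have [refl [sym trans]] := rho_equiv; split => [Eab | hab].
- by move: (refl b); rewrite -[rho b]/(cls rho b) -Eab.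
- apply/funext => y; apply/propext.
  by split => [/(trans _ _ _ (sym _ _ hab)) | /(trans _ _ _ hab)].
Qed.

Definition cls_supp (mu : M -> R) : set (set M) := cls rho @` [set x | 0 < mu x].

Lemma fuzzy_relP (mu nu : M -> R) :
  fuzzy_rel rho mu nu <-> cls_supp mu = cls_supp nu.
Proof.
have [_ [sym _]] := rho_equiv; split => [[mu_nu nu_mu] | E].
- apply/seteqP; split => _ [x hx <-].
  + have [y [hy /cls_eqP Exy]] := mu_nu x hx; by exists y.
  + have [y [hy /cls_eqP Exy]] := nu_mu x hx; by exists y.
- split => x hx.
  + have : cls_supp nu (cls rho x) by rewrite -E; exists x.
    by case=> y hy /cls_eqP /sym rxy; exists y.
  + have : cls_supp mu (cls rho x) by rewrite E; exists x.
    by case=> y hy /cls_eqP /sym rxy; exists y.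
Qed.

Lemma regular_cls_supp {a a' b b'} g : fuzzy_Gamma_regular o rho ->
  rho a a' -> rho b b' -> cls_supp (o a g b) = cls_supp (o a' g b').
Proof.
move=> reg haa' hbb'.
have [/fuzzy_relP -> _] := reg a a' b g haa'.
by have [_ /fuzzy_relP ->] := reg b b' a' g hbb'.
Qed.

Definition quotient_hop (X : set M) (g : G) (Y : set M) : set (set M) :=
  [set C | exists a b, [/\ X = cls rho a, Y = cls rho b & cls_supp (o a g b) C]].

Lemma quotient_hop_specP :
  (exists op, quotient_hop_spec o rho op) <-> fuzzy_Gamma_regular o rho.
Proof.
split => [[op spec] a b c g /cls_eqP Eab | reg].
- split; apply/fuzzy_relP; rewrite -[cls_supp _]spec -[RHS]spec; congruence.
- exists quotient_hop => a g b; apply/seteqP; split => C.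
  + move=> [a' [b' [/esym/cls_eqP haa' /esym/cls_eqP hbb']]].
    by rewrite (regular_cls_supp g reg haa' hbb').
  + by exists a, b.
Qed.

Lemma quotient_hypersemigroup op :
  Gamma_hypersemigroup [set: M] (assoc_hop o) -> quotient_hop_spec o rho op ->
  Gamma_hypersemigroup (quot_set rho) op.
Proof.
move=> [hop_ne hop_assoc] spec; split.
- move=> _ g _ [x _ <-] [y _ <-]; rewrite spec; split.
  + by have [[c hc] _] := hop_ne x g y I I; exists (cls rho c), c.
  + by move=> _ [c _ <-]; exists c.
- move=> _ _ _ al be [x _ <-] [y _ <-] [z _ <-].
  have assoc := hop_assoc x y z al be I I I.
  rewrite !spec; apply/seteqP; split => C [_ [c hc <-]].
  + rewrite spec => -[d hd <-].
    have : (\bigcup_(u in assoc_hop o y be z) assoc_hop o x al u) d by exists c.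
    rewrite assoc => -[u hu hdu].
    by exists (cls rho u); [exists u | rewrite spec; exists d].
  + rewrite spec => -[d hd <-].
    have : (\bigcup_(u in assoc_hop o x al y) assoc_hop o u be z) d by exists c.
    rewrite -assoc => -[u hu hdu].
    by exists (cls rho u); [exists u | rewrite spec; exists d].
Qed.

Hypothesis hop_ne : forall a g b, assoc_hop o a g b !=set0.

Lemma strongly_regular_cls_supp {a a' b b'} g : fuzzy_Gamma_strongly_regular o rho ->
  rho a a' -> rho b b' -> cls_supp (o a g b) = cls_supp (o a' g b').
Proof.
have [_ [sym _]] := rho_equiv => sreg haa' hbb'.
apply/seteqP; split => _ [x hx <-].
- have [y hy] := hop_ne a' g b'.
  by exists y => //; apply/cls_eqP/sym; exact: sreg haa' hbb' x y hx hy.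
- have [y hy] := hop_ne a g b.
  exists y => //; apply/cls_eqP/sym.
  exact: sreg (sym _ _ haa') (sym _ _ hbb') x y hx hy.
Qed.

Lemma strongly_regularP : fuzzy_Gamma_strongly_regular o rho <->
  fuzzy_Gamma_regular o rho /\ forall a g b, exists w, cls_supp (o a g b) = [set w].
Proof.
have [refl [sym _]] := rho_equiv; split => [sreg | [reg single] a b c d g hab hcd x y hx hy].
- split=> [a b c g hab | a g b].
  + by split; apply/fuzzy_relP/strongly_regular_cls_supp.
  + have [c hc] := hop_ne a g b; exists (cls rho c); apply/seteqP; split.
    * move=> _ [d hd <-]; apply/cls_eqP/sym; exact: sreg (refl a) (refl b) c d hc hd.
    * by move=> _ ->; exists c.
- have [w Ew] := single a g c.
  have hxw : cls_supp (o a g c) (cls rho x) by exists x.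
  have hyw : cls_supp (o a g c) (cls rho y) by rewrite (regular_cls_supp g reg hab hcd); exists y.
  by rewrite Ew in hxw hyw; apply/cls_eqP; rewrite hxw hyw.
Qed.

End FuzzyQuotient.

Theorem theorem5p5 (R : realType) (M G : Type) (o : M -> G -> M -> M -> R) :
  inhabited M -> inhabited G ->
  fuzzy_Gamma_hyperop o ->
  fuzzy_Gamma_hypersemigroup o ->
  Gamma_hypersemigroup [set: M] (assoc_hop o) ->
  forall rho : M -> M -> Prop, is_equivalence rho ->
  (fuzzy_Gamma_regular o rho <->
     exists op, quotient_hop_spec o rho op /\ Gamma_hypersemigroup (quot_set rho) op) /\
  (fuzzy_Gamma_strongly_regular o rho <->
     exists op, quotient_hop_spec o rho op /\ Gamma_semigroup (quot_set rho) op).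
Proof.
move=> _ _ _ _ hsg rho equiv.
have hop_ne a g b : assoc_hop o a g b !=set0 by exact: (hsg.1 a g b I I).1.
have specP := quotient_hop_specP o rho equiv.
have sregP := strongly_regularP o rho equiv hop_ne.
split; split.
- case/specP => op spec.
  by exists op; split => //; exact: quotient_hypersemigroup spec.
- by case=> op [spec _]; apply/specP; exists op.
- case/sregP => /specP [op spec] single.
  exists op; split => //; split; first exact: quotient_hypersemigroup spec.
  by move=> _ g _ [a _ <-] [b _ <-]; rewrite spec; exact: single.
- case=> op [spec [_ single]]; apply/sregP; split.
  + by apply/specP; exists op.
  + move=> a g b; rewrite /cls_supp -[_ @` _]spec.
    by apply: single; [exists a | exists b].
Qed.
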